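(* Fix a $C^0$-concept over a topologized field $\mathbb{K}$. Let $E,F\in\mathcal{M}$, $U\subseteq E$ open, $f\colon U\to F$ a map and $k\in\mathbb{N}_0\cup\{\infty\}$. If there is an open cover $(U_i)_{i\in I}$ of $U$ such that $f|_{U_i}\colon U_i\to F$ is of class $C^k$ for each $i\in I$, then $f$ is of class $C^k$.
   Context: Let $\mathbb{K}$ be a commutative ring with unit (here a field) carrying a topology. A $C^0$-concept over $\mathbb{K}$ consists of: (a) a class $\mathcal{M}$ of topologized $\mathbb{K}$-modules with $\mathbb{K}\in\mathcal{M}$; (b) for $E,F\in\mathcal{M}$ and open $U\subseteq E$, a set $C^0(U,F)$ of continuous maps; (c) for $E_1,E_2\in\mathcal{M}$ a topology on $E_1\times E_2$ (not necessarily the product topology) making it a member of $\mathcal{M}$; subject to: (I.1) composites of $C^0$-maps are $C^0$, identities and inclusions of open subsets are $C^0$; (I.2) $x\mapsto rx+b$ is $C^0$; (I.3) $t\mapsto tv+x$ is $C^0$; (I.4) $\mathbb{K}^\times$ is open and inversion is $C^0$; (I.5) a map whose restrictions to the members of an open cover of its domain are $C^0$ is $C^0$; (II.1) projections and $v\mapsto(v,y)$, $w\mapsto(x,w)$ are $C^0$; (II.2) $f_1\times f_2$ is $C^0$ for $C^0$-maps $f_i$; (II.3) diagonals are $C^0$; (II.4) exchange/associativity maps of products are $C^0$ both ways; (II.5) addition and scalar multiplication are $C^0$; (III) a $C^0$-map on open $U\subseteq\mathbb{K}$ is determined by its values on $U\cap\mathbb{K}^\times$. For open $V\subseteq X$,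 $V^{[1]}=\{(x,v,t)\in V\times X\times\mathbb{K}:x+tv\in V\}$; a $C^0$-map $g$ is $C^1$ if there is a $C^0$-map $g^{[1]}$ on $V^{[1]}$ with $g(x+tv)-g(x)=t\,g^{[1]}(x,v,t)$; recursively $g$ is $C^{k+1}$ if $C^k$ and $g^{[k]}$ is $C^1$, $g^{[k+1]}=(g^{[k]})^{[1]}$ on $V^{[k+1]}=(V^{[k]})^{[1]}$; $C^\infty$ = $C^k$ for all $k$. *)

From HB Require Import structures.
From mathcomp Require Import all_boot all_order all_algebra.
From mathcomp Require Import boolp classical_sets.
Unset Printing Implicit Defensive.
Import GRing.Theory.
Local Open Scope ring_scope.
Local Open Scope classical_set_scope.

Definition is_topology (T : Type) (op : set (set T)) : Prop :=
  [/\ op setT, op set0,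
      (forall A B, op A -> op B -> op (A `&` B)) &
      (forall (I : Type) (F : I -> set T), (forall i, op (F i)) ->
         op (\bigcup_i F i))].

Record TMod (K : fieldType) := TModule {
  tcar : lmodType K;
  topen : set (set tcar) }.
Arguments TModule {K}.
Arguments topen {K} _ _.
Arguments tcar {K} _.

(** The raw data of a C^0-concept over K:
    - [inM]  : the class M of topologized K-modules;
    - [ptop] : the chosen topology on E1 x E2 (not necessarily the product one);
    - [C0 E F U f] : "f|_U belongs to C^0(U,F)".  Maps U -> F are represented
      by total functions E -> F; only their values on U matter (axiom C0_ext). *)
Record C0data (K : fieldType) := C0Data {
  inM : TMod K -> Prop;
  ptop : forall A B : TMod K, set (set (tcar A * tcar B)%type);
  C0 : forall A B : TMod K, set (tcar A) -> (tcar A -> tcar B) -> Prop }.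

Arguments inM {K} c _.
Arguments ptop {K} c A B _.
Arguments C0 {K} c A B _ _.

Section Concept.
Variables (K : fieldType) (tauK : set (set K)) (D : C0data K).

Definition Kobj : TMod K := TModule (K^o)%type tauK.

Definition tprod (A B : TMod K) : TMod K :=
  TModule (tcar A * tcar B)%type (ptop D A B).

(** Continuity of f|_U : U -> F for the subspace topology on U. *)
Definition cont_on (A B : TMod K) (U : set (tcar A)) (f : tcar A -> tcar B) :=
  forall W, topen B W -> exists O, topen A O /\ O `&` U = U `&` f @^-1` W.

Record C0concept : Prop := {
  M_top : forall A, inM D A -> is_topology _ (topen A);
  M_K : inM D Kobj;
  M_prod : forall A B, inM D A -> inM D B -> inM D (tprod A B);
  C0_cont : forall A B U f, inM D A -> inM D B -> topen A U ->
     C0 D A B U f -> cont_on A B U f;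
  C0_ext : forall A B U f g, inM D A -> inM D B -> topen A U ->
     C0 D A B U f -> (forall x, U x -> f x = g x) -> C0 D A B U g;
  C0_comp : forall A B C U V f g, inM D A -> inM D B -> inM D C ->
     topen A U -> topen B V -> (forall x, U x -> V (f x)) ->
     C0 D A B U f -> C0 D B C V g -> C0 D A C U (g \o f);
  C0_id : forall A U, inM D A -> topen A U -> C0 D A A U id;
  C0_affine : forall A (r : K) (b : tcar A), inM D A ->
     C0 D A A setT (fun x => r *: x + b);
  C0_line : forall A (v x : tcar A), inM D A ->
     C0 D Kobj A setT (fun t : K^o => t *: v + x);
  units_open : topen Kobj [set t : K^o | t != 0];
  C0_inv : C0 D Kobj Kobj [set t : K^o | t != 0] (fun t : K^o => (t : K)^-1);
  C0_local : forall A B (U : set (tcar A)) f (I : Type) (Ui : I -> set (tcar A)),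
     inM D A -> inM D B -> topen A U -> (forall i, topen A (Ui i)) ->
     \bigcup_i Ui i = U -> (forall i, C0 D A B (Ui i) f) -> C0 D A B U f;
  C0_fst : forall A B, inM D A -> inM D B ->
     C0 D (tprod A B) A setT (fun p => p.1);
  C0_snd : forall A B, inM D A -> inM D B ->
     C0 D (tprod A B) B setT (fun p => p.2);
  C0_pairl : forall A B (y : tcar B), inM D A -> inM D B ->
     C0 D A (tprod A B) setT (fun v => (v, y));
  C0_pairr : forall A B (x : tcar A), inM D A -> inM D B ->
     C0 D B (tprod A B) setT (fun w => (x, w));
  C0_prodmap : forall A1 A2 B1 B2 U1 U2 f1 f2,
     inM D A1 -> inM D A2 -> inM D B1 -> inM D B2 ->
     topen A1 U1 -> topen A2 U2 -> C0 D A1 B1 U1 f1 -> C0 D A2 B2 U2 f2 ->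
     C0 D (tprod A1 A2) (tprod B1 B2) [set p | U1 p.1 /\ U2 p.2]
        (fun p => (f1 p.1, f2 p.2));
  C0_diag : forall A, inM D A -> C0 D A (tprod A A) setT (fun x => (x, x));
  C0_swap : forall A B, inM D A -> inM D B ->
     C0 D (tprod A B) (tprod B A) setT (fun p => (p.2, p.1));
  C0_assoc : forall A B C, inM D A -> inM D B -> inM D C ->
     C0 D (tprod (tprod A B) C) (tprod A (tprod B C)) setT
        (fun p => (p.1.1, (p.1.2, p.2)));
  C0_assocV : forall A B C, inM D A -> inM D B -> inM D C ->
     C0 D (tprod A (tprod B C)) (tprod (tprod A B) C) setT
        (fun p => ((p.1, p.2.1), p.2.2));
  C0_add : forall A, inM D A -> C0 D (tprod A A) A setT (fun p => p.1 + p.2);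
  C0_scale : forall A, inM D A ->
     C0 D (tprod Kobj A) A setT (fun p => (p.1 : K) *: p.2);
  C0_unique : forall B (U : set K^o) f g, inM D B -> topen Kobj U ->
     C0 D Kobj B U f -> C0 D Kobj B U g ->
     (forall t, U t -> t != 0 -> f t = g t) -> forall t, U t -> f t = g t }.

Fixpoint itM (A : TMod K) (k : nat) : TMod K :=
  match k with
  | 0 => A
  | k.+1 => tprod (tprod (itM A k) (itM A k)) Kobj
  end.

Fixpoint itV (A : TMod K) (V : set (tcar A)) (k : nat) : set (tcar (itM A k)) :=
  match k return set (tcar (itM A k)) with
  | 0 => V
  | k.+1 => fun p => itV A V k p.1.1 /\ itV A V k (p.1.1 + (p.2 : K) *: p.1.2)
  end.

Definition isCk (A B : TMod K) (V : set (tcar A)) (g : tcar A -> tcar B)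
    (k : nat) : Prop :=
  exists gs : forall j : nat, tcar (itM A j) -> tcar B,
    [/\ (forall x, V x -> gs 0%N x = g x),
        (forall j, (j <= k)%N -> C0 D (itM A j) B (itV A V j) (gs j)) &
        (forall j, (j < k)%N -> forall p : tcar (itM A j.+1), itV A V j.+1 p ->
           gs j (p.1.1 + (p.2 : K) *: p.1.2) - gs j p.1.1
             = (p.2 : K) *: gs j.+1 p)].

End Concept.

Inductive ext_nat := Fin of nat | Infty.

Definition isC (K : fieldType) (tauK : set (set K)) (D : C0data K)
    (A B : TMod K) (V : set (tcar A)) (g : tcar A -> tcar B) (k : ext_nat) :=
  match k with
  | Fin n => isCk K tauK D A B V g n
  | Infty => forall n, isCk K tauK D A B V g n
  end.

(* A C^0 map g is C^(k+1) on V iff it has a difference quotient g^[1] on V^[1]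
   (g(x + t v) - g(x) = t g^[1](x, v, t)) which is C^k; this recursive form of
   C^k is equivalent to the one by towers of maps. C^k maps are stable under
   pairing, composition, sums, scalar multiplication and inversion in K. Given a
   cover of U by the U_i, induct on k: U^[1] is covered by the U_i^[1] and by
   the open part where t != 0. On U_i^[1] take f_i^[1]; where t != 0 take the
   difference quotient t^-1 (f(x + t v) - f(x)), which is C^k since f is C^k on U
   by induction. These pieces agree on overlaps: off t = 0 they must equal the
   difference quotient, and the continuous f_i^[1] are then equal on the whole
   line through t = 0 by axiom (III). Gluing them gives f^[1], and f^[1] is C^k
   by induction. *)

From HB Require Import structures.
From mathcomp Require Import all_boot all_order all_algebra.
From mathcomp Require Import boolp classical_sets.
From mathcomp Require Import ring.
Import GRing.Theory.
Local Open Scope ring_scope.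
Local Open Scope classical_set_scope.

Lemma glue_family (T R I : Type) (W : I -> set T) (G : I -> T -> R) (r : R) :
    (forall i j x, W i x -> W j x -> G i x = G j x) ->
  exists g : T -> R, forall i x, W i x -> g x = G i x.
Proof.
move=> agree.
exists (fun x => if pselect (exists i, W i x) is left ex then G (projT1 (cid ex)) x else r).
move=> i x Wix; case: pselect => [ex|]; last by case; exists i.
by case: cid => j Wjx /=; apply: agree.
Qed.

Lemma scale_diffquot (K : fieldType) (B : lmodType K) (a b s : K) (x y : B) :
  (a + s * b) *: (x + s *: y) - a *: x = s *: (b *: x + a *: y + s *: (b *: y)).
Proof.
rewrite !scalerDr !scalerDl !scalerA addrAC [a *: x + _]addrC addrK -scalerDl.
by rewrite -addrA -scalerDl; congr (_ *: _ + _ *: _); ring.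
Qed.

Lemma inv_diffquot (K : fieldType) (t s v : K) : t != 0 -> t + s * v != 0 ->
  (t + s * v)^-1 - t^-1 = s * - (v * (t^-1 * (t + s * v)^-1)).
Proof. by move=> t0 tsv0; field; apply/andP. Qed.

(* Membership in M is inferred by instance resolution; the mode stops it from
   choosing the member itself. *)
Existing Class inM.
#[local] Hint Mode inM - - ! : typeclass_instances.

Arguments M_top {K tauK D} c {A _}.
Arguments M_K {K tauK D} c.
Arguments M_prod {K tauK D} c {A B _ _}.
Arguments C0_cont {K tauK D} c {A B U f _ _} _ _ _ _.
Arguments C0_ext {K tauK D} c {A B U f g _ _} _ _ _.
Arguments C0_comp {K tauK D} c {A B C U V f g _ _ _} _ _ _ _ _.
Arguments C0_id {K tauK D} c {A U _} _.
Arguments C0_affine {K tauK D} c {A} r b {_}.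
Arguments units_open {K tauK D} c.
Arguments C0_inv {K tauK D} c.
Arguments C0_local {K tauK D} c {A B U f I Ui _ _} _ _ _ _.
Arguments C0_fst {K tauK D} c {A B _ _}.
Arguments C0_snd {K tauK D} c {A B _ _}.
Arguments C0_pairr {K tauK D} c {A B} x {_ _}.
Arguments C0_prodmap {K tauK D} c {A1 A2 B1 B2 U1 U2 f1 f2 _ _ _ _} _ _ _ _.
Arguments C0_diag {K tauK D} c {A _}.
Arguments C0_add {K tauK D} c {A _}.
Arguments C0_scale {K tauK D} c {A _}.
Arguments C0_unique {K tauK D} c {B U f g _} _ _ _ _ t _.

Section C0Concept.
Context {K : fieldType} {tauK : set (set K)} {D : C0data K}.
Hypothesis HD : C0concept K tauK D.

Local Notation KK := (Kobj K tauK).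
Local Notation tp := (tprod K D).
Local Notation itM := (itM K tauK D).
Local Notation itV := (itV K tauK D).

#[local] Instance inM_K : inM D KK := M_K HD.

#[local] Instance inM_tprod A B : inM D A -> inM D B -> inM D (tp A B).
Proof. by move=> hA hB; apply: (M_prod HD). Qed.

#[local] Instance inM_itM A j : inM D A -> inM D (itM A j).
Proof. by move=> hA; elim: j => //= j IH; apply: inM_tprod. Qed.

Lemma open_setT {A} {hA : inM D A} : topen A setT.
Proof. by case: (M_top HD (A := A)). Qed.

Lemma open_setI {A U V} {hA : inM D A} : topen A U -> topen A V -> topen A (U `&` V).
Proof. by case: (M_top HD (A := A)) => _ _ + _; apply. Qed.

Lemma open_units : topen KK [set t : K^o | t != 0].
Proof. exact: units_open HD. Qed.

Lemma C0_sub {A B V V' f} {hA : inM D A} {hB : inM D B} :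
  topen A V -> topen A V' -> V' `<=` V -> C0 D A B V f -> C0 D A B V' f.
Proof. by move=> hV hV' V'V cf; exact (C0_comp HD hV' hV V'V (C0_id HD hV') cf). Qed.

Lemma C0_setT_sub {A B V f} {hA : inM D A} {hB : inM D B} :
  topen A V -> C0 D A B setT f -> C0 D A B V f.
Proof. by move=> hV; apply: C0_sub open_setT hV _. Qed.

Lemma open_C0_preimage {A B U W f} {hA : inM D A} {hB : inM D B} :
  topen A U -> topen B W -> C0 D A B U f -> topen A (U `&` f @^-1` W).
Proof.
move=> hU hW cf; have [O [hO <-]] := C0_cont HD hU cf W hW.
exact: open_setI.
Qed.

Lemma C0_compT {A B C U f g} {hA : inM D A} {hB : inM D B} {hC : inM D C} :
  topen A U -> C0 D A B U f -> C0 D B C setT g -> C0 D A C U (fun x => g (f x)).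
Proof. by move=> hU cf cg; exact (C0_comp HD hU open_setT (fun _ _ => I) cf cg). Qed.

Lemma C0_pair {A B C V f g} {hA : inM D A} {hB : inM D B} {hC : inM D C} :
  topen A V -> C0 D A B V f -> C0 D A C V g -> C0 D A (tp B C) V (fun x => (f x, g x)).
Proof.
move=> hV cf cg.
have hVV : topen (tp A A) [set p | V p.1 /\ V p.2].
  have -> : [set p : tcar (tp A A) | V p.1 /\ V p.2] =
      (setT `&` (fun p : tcar (tp A A) => p.1) @^-1` V) `&`
      (setT `&` (fun p : tcar (tp A A) => p.2) @^-1` V).
    by apply/seteqP; split=> p /=; [case | case=> [[_ ?] [_ ?]]].
  by apply: open_setI; apply: open_C0_preimage open_setT hV _;
    [exact: (C0_fst HD) | exact: (C0_snd HD)].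
exact (C0_comp HD (B := tp A A) (f := fun x => (x, x)) hV hVV
  (fun x (Vx : V x) => conj Vx Vx) (C0_setT_sub hV (C0_diag HD))
  (C0_prodmap HD hV hV cf cg)).
Qed.

Definition shift {A} (p : tcar (itM A 1)) : tcar A := p.1.1 + (p.2 : K) *: p.1.2.

Section Projections.
Context {A : TMod K} {hA : inM D A}.

Lemma C0_pi11 : C0 D (itM A 1) A setT (fun p => p.1.1).
Proof. exact: C0_compT open_setT (C0_fst HD) (C0_fst HD). Qed.

Lemma C0_pi12 : C0 D (itM A 1) A setT (fun p => p.1.2).
Proof. exact: C0_compT open_setT (C0_fst HD) (C0_snd HD). Qed.

Lemma C0_pi2 : C0 D (itM A 1) KK setT (fun p => p.2).
Proof. exact: (C0_snd HD). Qed.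

Lemma C0_shift : C0 D (itM A 1) A setT shift.
Proof.
have cscale : C0 D (itM A 1) A setT (fun p => (p.2 : K) *: p.1.2).
  exact: C0_compT open_setT (C0_pair open_setT C0_pi2 C0_pi12) (C0_scale HD).
exact (C0_compT open_setT (C0_pair open_setT C0_pi11 cscale) (C0_add HD)).
Qed.

End Projections.

Lemma open_itV1 {A V} {hA : inM D A} : topen A V -> topen (itM A 1) (itV A V 1).
Proof.
move=> hV.
have -> : itV A V 1 = (setT `&` (fun p => p.1.1) @^-1` V) `&` (setT `&` shift @^-1` V).
  by apply/seteqP; split=> p /=; [case | case=> [[_ ?] [_ ?]]].
exact: open_setI (open_C0_preimage open_setT hV C0_pi11)
  (open_C0_preimage open_setT hV C0_shift).
Qed.

Lemma open_itV {A V} {hA : inM D A} j : topen A V -> topen (itM A j) (itV A V j).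
Proof. by move=> hV; elim: j => //= j; apply: open_itV1. Qed.

Definition is_diffquot {A B} (V : set (tcar A)) (g : tcar A -> tcar B)
    (g1 : tcar (itM A 1) -> tcar B) :=
  forall p, itV A V 1 p -> g (shift p) - g p.1.1 = (p.2 : K) *: g1 p.

Fixpoint Ck {A B} (V : set (tcar A)) (g : tcar A -> tcar B) (k : nat) : Prop :=
  match k with
  | 0 => C0 D A B V g
  | k.+1 => C0 D A B V g /\ exists2 g1, is_diffquot V g g1 & Ck (itV A V 1) g1 k
  end.

Lemma Ck_C0 {A B V g k} : @Ck A B V g k -> C0 D A B V g.
Proof. by case: k => [|k] //= []. Qed.

Lemma CkW {A B V g k} : @Ck A B V g k.+1 -> Ck V g k.
Proof.
elim: k A B V g => [|k IH] A B V g; first by case.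
by case=> cg [g1 dg /IH cg1]; split=> //; exists g1.
Qed.

Lemma eq_Ck {A B V f g} {hA : inM D A} {hB : inM D B} {k} : topen A V ->
  (forall x, V x -> f x = g x) -> @Ck A B V f k -> Ck V g k.
Proof.
case: k => [|k] hV fg; first by move=> cf; apply: (C0_ext HD hV cf).
case=> cf [f1 df cf1]; split; first exact: (C0_ext HD hV cf).
by exists f1 => // p [Vx Vs]; rewrite -!fg //; apply: df.
Qed.

Lemma Ck_linear {A B V L} {hA : inM D A} {hB : inM D B} {k} : topen A V ->
  linear L -> C0 D A B setT L -> Ck V L k.
Proof.
elim: k A B V L hA hB => [|k IH] A B V L hA hB hV linL cL; first exact: C0_setT_sub.
split; first exact: C0_setT_sub.
exists (fun p => L p.1.2).
  by move=> p _; rewrite /shift [p.1.1 + _]addrC linL addrK.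
apply: IH (open_itV1 hV) (fun a u v => linL a u.1.2 v.1.2) _.
exact: C0_compT open_setT C0_pi12 cL.
Qed.

Lemma Ck_pair {A B C V f g} {hA : inM D A} {hB : inM D B} {hC : inM D C} {k} :
  topen A V -> Ck V f k -> Ck V g k -> Ck V (fun x => (f x, g x) : tcar (tp B C)) k.
Proof.
elim: k A B C V f g hA hB hC => [|k IH] A B C V f g hA hB hC hV; first exact: C0_pair.
case=> cf [f1 df cf1] [cg [g1 dg cg1]]; split; first exact: C0_pair.
exists (fun p => (f1 p, g1 p)); last exact: IH (open_itV1 hV) cf1 cg1.
by move=> p Vp; apply: injective_projections; [apply: df | apply: dg].
Qed.

Lemma Ck_comp {A B C V W h g} {hA : inM D A} {hB : inM D B} {hC : inM D C} {k} :
  topen A V -> topen B W -> (forall x, V x -> W (h x)) ->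
  Ck V h k -> @Ck B C W g k -> Ck V (fun x => g (h x)) k.
Proof.
elim: k A B C V W h g hA hB hC => [|k IH] A B C V W h g hA hB hC hV hW hVW.
  by move=> ch cg; apply: (C0_comp HD hV hW hVW ch cg).
move=> Chk [cg [g1 dg Cg1]]; have Chk' := CkW Chk; case: Chk => ch [h1 dh Ch1].
split; first exact: (C0_comp HD hV hW hVW ch cg).
pose H p : tcar (itM B 1) := ((h p.1.1, h1 p), p.2).
have h_shift p : itV A V 1 p -> h (shift p) = shift (H p).
  by move=> Vp; rewrite [shift (H p)]/shift /= -dh // addrC subrK.
have HVW p : itV A V 1 p -> itV B W 1 (H p).
  by move=> Vp; case: (Vp) => Vx /hVW; rewrite h_shift //; split; first apply: hVW.
exists (fun p => g1 (H p)); first by move=> p Vp; rewrite h_shift //; apply: dg (HVW p Vp).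
apply: (IH _ _ _ _ _ _ _ _ _ _ (open_itV1 hV) (open_itV1 hW) HVW _ Cg1).
apply: Ck_pair (open_itV1 hV) _ _; first apply: Ck_pair (open_itV1 hV) _ Ch1.
- apply: (IH _ _ _ _ _ _ _ _ _ _ (open_itV1 hV) hV
    (fun p (Vp : itV A V 1 p) => Vp.1) _ Chk').
  exact: Ck_linear (open_itV1 hV) (fun _ _ _ => erefl) C0_pi11.
- exact: Ck_linear (open_itV1 hV) (fun _ _ _ => erefl) C0_pi2.
Qed.

Section Arithmetic.
Context {A B : TMod K} {hA : inM D A} {hB : inM D B} {V : set (tcar A)}.
Hypothesis hV : topen A V.

Lemma CkD {f g k} : Ck V f k -> Ck V g k -> @Ck A B V (fun x => f x + g x) k.
Proof.
move=> cf cg.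
apply: (Ck_comp (g := fun p : tcar (tp B B) => p.1 + p.2) hV open_setT (fun _ _ => I)
  (Ck_pair hV cf cg)).
apply: Ck_linear open_setT _ (C0_add HD).
by move=> a u v; rewrite /= scalerDr addrACA.
Qed.

Lemma CkN {f k} : Ck V f k -> @Ck A B V (fun x => - f x) k.
Proof.
move=> cf; apply: (Ck_comp (g := -%R) hV open_setT (fun _ _ => I) cf).
apply: Ck_linear open_setT _ _; first by move=> a u v; rewrite opprD scalerN.
by apply: (C0_ext HD open_setT (C0_affine HD (-1) 0)) => x _; rewrite addr0 scaleN1r.
Qed.

End Arithmetic.

Lemma Ck_scale {B} {hB : inM D B} {k} :
  Ck (setT : set (tcar (tp KK B))) (fun p => (p.1 : K) *: p.2) k.
Proof.
pose m (p : tcar (tp KK B)) := (p.1 : K) *: p.2.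
elim: k => [|k IH]; first exact: (C0_scale HD).
split; first exact: (C0_scale HD).
exists (fun q : tcar (itM (tp KK B) 1) =>
    m (q.1.2.1, q.1.1.2) + m (q.1.1.1, q.1.2.2) + (q.2 : K) *: m q.1.2).
  by move=> q _; apply: scale_diffquot.
have hV1 : topen _ (itV (tp KK B) setT 1) by exact: open_itV1 open_setT.
have m_lin L : linear L -> C0 D _ _ setT L ->
    Ck (itV (tp KK B) setT 1) (fun q => m (L q)) k.
  move=> linL cL; apply: (Ck_comp (g := m) hV1 open_setT (fun _ _ => I) _ IH).
  exact: Ck_linear hV1 linL cL.
apply: (CkD hV1); first apply: (CkD hV1).
- apply: m_lin (fun _ _ _ => erefl) _; apply: C0_pair open_setT _ _.
    exact: C0_compT open_setT C0_pi12 (C0_fst HD).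
  exact: C0_compT open_setT C0_pi11 (C0_snd HD).
- apply: m_lin (fun _ _ _ => erefl) _; apply: C0_pair open_setT _ _.
    exact: C0_compT open_setT C0_pi11 (C0_fst HD).
  exact: C0_compT open_setT C0_pi12 (C0_snd HD).
- apply: (Ck_comp (h := fun q : tcar (itM (tp KK B) 1) => (q.2, m q.1.2) : tcar (tp KK B))
    hV1 open_setT (fun _ _ => I) _ IH).
  apply: (Ck_pair hV1 (Ck_linear hV1 (fun _ _ _ => erefl) C0_pi2)).
  exact: m_lin (fun _ _ _ => erefl) C0_pi12.
Qed.

Lemma CkZ {A B V} {a : tcar A -> tcar KK} {f} {hA : inM D A} {hB : inM D B} {k} :
  topen A V -> Ck V a k -> Ck V f k -> @Ck A B V (fun x => (a x : K) *: f x) k.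
Proof.
move=> hV ca cf.
exact: (Ck_comp (g := fun p : tcar (tp KK B) => (p.1 : K) *: p.2) hV open_setT
  (fun _ _ => I) (Ck_pair hV ca cf) Ck_scale).
Qed.

Lemma Ck_shift {A W} {hA : inM D A} {k} : topen (itM A 1) W -> @Ck _ A W shift k.
Proof.
move=> hW.
have c11 : Ck W (fun q => q.1.1) k by exact: Ck_linear hW (fun _ _ _ => erefl) C0_pi11.
have c12 : Ck W (fun q => q.1.2) k by exact: Ck_linear hW (fun _ _ _ => erefl) C0_pi12.
have c2 : Ck W (fun q => q.2) k by exact: Ck_linear hW (fun _ _ _ => erefl) C0_pi2.
exact (CkD hW c11 (CkZ hW c2 c12)).
Qed.

Lemma Ck_inv {k} : @Ck KK KK [set t : K^o | t != 0] (fun t : K^o => (t : K)^-1 : K^o) k.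
Proof.
elim: k => [|k IH]; first exact: (C0_inv HD).
split; first exact: (C0_inv HD).
exists (fun q : tcar (itM KK 1) =>
    - ((q.1.2 : K) *: (((q.1.1 : K)^-1 : K^o) *: ((shift q : K)^-1 : K^o)))).
  by move=> q [t0 tsv0]; apply: inv_diffquot.
pose V1 := itV KK [set t : K^o | t != 0] 1.
have hV1 : topen _ V1 by exact: open_itV1 open_units.
have c11 : Ck V1 (fun q => q.1.1) k by exact: Ck_linear hV1 (fun _ _ _ => erefl) C0_pi11.
have c12 : Ck V1 (fun q => q.1.2) k by exact: Ck_linear hV1 (fun _ _ _ => erefl) C0_pi12.
apply/(CkN hV1)/(CkZ hV1 c12)/(CkZ hV1).
  exact: (Ck_comp hV1 open_units (fun q (Vq : V1 q) => Vq.1) c11 IH).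
exact: (Ck_comp hV1 open_units (fun q (Vq : V1 q) => Vq.2) (Ck_shift hV1) IH).
Qed.

Lemma diffquot_unique {A B V1 V2 f g1 g2} {hA : inM D A} {hB : inM D B} :
  topen A V1 -> topen A V2 -> is_diffquot V1 f g1 -> is_diffquot V2 f g2 ->
  C0 D _ B (itV A V1 1) g1 -> C0 D _ B (itV A V2 1) g2 ->
  forall p, itV A V1 1 p -> itV A V2 1 p -> g1 p = g2 p.
Proof.
move=> hV1 hV2 d1 d2 c1 c2 [[x v] s] p1 p2.
pose line (r : tcar KK) : tcar (itM A 1) := ((x, v), r).
have cline : C0 D KK (itM A 1) setT line by exact (C0_pairr HD ((x, v) : tcar (tp A A))).
pose S := setT `&` line @^-1` (itV A V1 1 `&` itV A V2 1).
have hS : topen KK S.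
  exact: open_C0_preimage open_setT (open_setI (open_itV1 hV1) (open_itV1 hV2)) cline.
have cS : C0 D KK (itM A 1) S line by exact: C0_sub open_setT hS (fun _ _ => I) cline.
apply: (C0_unique HD hS (C0_comp HD hS (open_itV1 hV1) (fun r Sr => Sr.2.1) cS c1)
  (C0_comp HD hS (open_itV1 hV2) (fun r Sr => Sr.2.2) cS c2) _ s) => //.
move=> r [_ [l1 l2]] r0 /=; apply: (scalerI r0).
by rewrite -(d1 _ l1) -(d2 _ l2).
Qed.

Definition divdiff {A B} (f : tcar A -> tcar B) (p : tcar (itM A 1)) : tcar B :=
  (p.2 : K)^-1 *: (f (shift p) - f p.1.1).

Lemma open_itV1_units {A U} {hA : inM D A} : topen A U ->
  topen (itM A 1) (itV A U 1 `&` [set p | p.2 != 0]).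
Proof.
move=> hU.
exact (open_C0_preimage (open_itV1 hU) open_units (C0_setT_sub (open_itV1 hU) C0_pi2)).
Qed.

Lemma Ck_divdiff {A B U f} {hA : inM D A} {hB : inM D B} {k} : topen A U ->
  Ck U f k -> @Ck _ B (itV A U 1 `&` [set p | p.2 != 0]) (divdiff f) k.
Proof.
move=> hU cf; set R := _ `&` _; have hR : topen _ R by exact: open_itV1_units.
have c11 : Ck R (fun p => p.1.1) k by exact: Ck_linear hR (fun _ _ _ => erefl) C0_pi11.
have c2 : Ck R (fun p => p.2) k by exact: Ck_linear hR (fun _ _ _ => erefl) C0_pi2.
have cinv : @Ck _ KK R (fun p => (p.2 : K)^-1 : K^o) k.
  exact: (Ck_comp hR open_units (fun p (Rp : R p) => Rp.2) c2 Ck_inv).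
apply: (CkZ hR cinv); apply: (CkD hR); last apply: (CkN hR).
  exact: (Ck_comp hR hU (fun p (Rp : R p) => Rp.1.2) (Ck_shift hR) cf).
exact: (Ck_comp hR hU (fun p (Rp : R p) => Rp.1.1) c11 cf).
Qed.

Definition itV1_cover {A I} (U : set (tcar A)) (Ui : I -> set (tcar A)) (o : option I) :
    set (tcar (itM A 1)) :=
  if o is Some i then itV A (Ui i) 1 else itV A U 1 `&` [set p | p.2 != 0].

Lemma bigcup_itV1_cover {A I U} {Ui : I -> set (tcar A)} : \bigcup_i Ui i = U ->
  \bigcup_o itV1_cover U Ui o = itV A U 1.
Proof.
move=> cover; apply/seteqP; split=> [p [[i|] _ [Wx Ws]] | p Up].
- by rewrite -cover; split; exists i.
- exact: Wx.
- have [t0|t0] := eqVneq (p.2 : K) 0; last by exists None.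
  have [i _ Uix] : (\bigcup_i Ui i) p.1.1 by rewrite cover; case: Up.
  by exists (Some i) => //=; rewrite /shift t0 scale0r addr0.
Qed.

Lemma Ck_local {A B U f I} {Ui : I -> set (tcar A)} {hA : inM D A} {hB : inM D B} {k} :
  topen A U -> (forall i, topen A (Ui i)) -> \bigcup_i Ui i = U ->
  (forall i, Ck (Ui i) f k) -> @Ck A B U f k.
Proof.
elim: k A B U f I Ui hA hB => [|k IH] A B U f I Ui hA hB hU hUi cover Cf.
  exact: (C0_local HD hU hUi cover Cf).
have cf : C0 D A B U f by exact: (C0_local HD hU hUi cover (fun i => Ck_C0 (Cf i))).
have /choice[G HG] : forall i, exists g1 : tcar (itM A 1) -> tcar B,
    is_diffquot (Ui i) f g1 /\ Ck (itV A (Ui i) 1) g1 k.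
  by move=> i; case: (Cf i) => _ [g1 dg cg1]; exists g1.
pose W := itV1_cover U Ui.
pose G' o := if o is Some i then G i else divdiff f.
have hW o : topen _ (W o).
  by case: o => [i|] /=; [exact: open_itV1 | exact: open_itV1_units].
have dqW o p : W o p -> f (shift p) - f p.1.1 = (p.2 : K) *: G' o p.
  case: o => [i|] /= Wp; first exact: (HG i).1.
  by rewrite /divdiff scalerA mulfV ?scale1r //; case: Wp.
have [g1 g1E] : exists g1, forall o p, W o p -> g1 p = G' o p.
  apply: glue_family 0 _ => o o' p Wp Wp'.
  have [t0|t0] := eqVneq (p.2 : K) 0; last first.
    by apply: (scalerI t0); rewrite -(dqW o) // -(dqW o').
  case: o o' Wp Wp' => [i|] [j|] Wp Wp'; try by case: Wp => _ /=; rewrite t0 eqxx.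
    exact: (diffquot_unique (hUi i) (hUi j) (HG i).1 (HG j).1
      (Ck_C0 (HG i).2) (Ck_C0 (HG j).2)).
  by case: Wp' => _ /=; rewrite t0 eqxx.
have coverW := bigcup_itV1_cover cover.
split=> //; exists g1.
  move=> p Up; have [o _ Wp] : (\bigcup_o W o) p by rewrite coverW.
  by rewrite (g1E o) //; apply: dqW.
apply: (IH _ _ _ _ _ _ _ _ (open_itV1 hU) hW coverW) => o.
apply: eq_Ck (hW o) (fun p Wp => esym (g1E o p Wp)) _.
case: o => [i|] /=; first exact: (HG i).2.
exact: Ck_divdiff hU (IH _ _ _ _ _ _ _ _ hU hUi cover (fun i => CkW (Cf i))).
Qed.

(* X^[j+1] and (X^[1])^[j] are the same space up to rebracketing of the
   products, but the types are not convertible for variable j. *)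
Fixpoint peel {A} j : tcar (itM A j.+1) -> tcar (itM (itM A 1) j) :=
  match j with
  | 0 => id
  | j.+1 => fun p => ((peel j p.1.1, peel j p.1.2), p.2)
  end.

Fixpoint unpeel {A} j : tcar (itM (itM A 1) j) -> tcar (itM A j.+1) :=
  match j with
  | 0 => id
  | j.+1 => fun p => ((unpeel j p.1.1, unpeel j p.1.2), p.2)
  end.

Lemma peelDZ {A} j x y (t : K) : @peel A j (x + t *: y) = peel j x + t *: peel j y.
Proof.
elim: j x y => [|j IH] x y //=.
by rewrite IH [peel j (_ + _)]IH.
Qed.

Lemma unpeelDZ {A} j x y (t : K) : @unpeel A j (x + t *: y) = unpeel j x + t *: unpeel j y.
Proof.
elim: j x y => [|j IH] x y //=.
by rewrite IH [unpeel j (_ + _)]IH.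
Qed.

Lemma unpeelK {A} j : cancel (@unpeel A j) (peel j).
Proof. by elim: j => [|j IH] // [[x v] t] /=; rewrite !IH. Qed.

Lemma C0_peel {A} {hA : inM D A} j : C0 D (itM A j.+1) (itM (itM A 1) j) setT (peel j).
Proof.
elim: j => [|j IH]; first exact: (C0_id HD open_setT).
apply: C0_pair open_setT (C0_pair open_setT _ _) C0_pi2.
  exact: C0_compT open_setT C0_pi11 IH.
exact: C0_compT open_setT C0_pi12 IH.
Qed.

Lemma C0_unpeel {A} {hA : inM D A} j : C0 D (itM (itM A 1) j) (itM A j.+1) setT (unpeel j).
Proof.
elim: j => [|j IH]; first exact: (C0_id HD open_setT).
apply: C0_pair open_setT (C0_pair open_setT _ _) C0_pi2.
  exact: C0_compT open_setT C0_pi11 IH.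
exact: C0_compT open_setT C0_pi12 IH.
Qed.

Lemma itV_peel {A V} j p : itV A V j.+1 p <-> itV (itM A 1) (itV A V 1) j (peel j p).
Proof.
elim: j p => [|j IH] p //=.
by rewrite -peelDZ -!IH.
Qed.

Lemma itV_unpeel {A V} j q : itV (itM A 1) (itV A V 1) j q -> itV A V j.+1 (unpeel j q).
Proof. by rewrite itV_peel unpeelK. Qed.

Local Notation isCk := (isCk K tauK D).

Lemma isCk_Ck {A B V g} {hA : inM D A} {hB : inM D B} {k} : topen A V ->
  isCk A B V g k -> Ck V g k.
Proof.
elim: k A B V g hA hB => [|k IH] A B V g hA hB hV [gs [g0 cgs dgs]].
  exact: (C0_ext HD hV (cgs 0 isT) g0).
split; first exact: (C0_ext HD hV (cgs 0 isT) g0).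
exists (gs 1).
  by move=> p Vp; rewrite -!g0; [apply: (dgs 0) | case: Vp..].
apply: (IH _ _ _ _ _ _ (open_itV1 hV)).
exists (fun j q => gs j.+1 (unpeel j q)); split=> // [j jk | j jk q Vq].
  exact: (C0_comp HD (open_itV j (open_itV1 hV)) (open_itV j.+1 hV) (itV_unpeel j)
    (C0_setT_sub (open_itV j (open_itV1 hV)) (C0_unpeel j)) (cgs j.+1 jk)).
by rewrite unpeelDZ; exact: (dgs j.+1 jk (unpeel j.+1 q) (itV_unpeel j.+1 q Vq)).
Qed.

Lemma Ck_isCk {A B V g} {hA : inM D A} {hB : inM D B} {k} : topen A V ->
  Ck V g k -> isCk A B V g k.
Proof.
elim: k A B V g hA hB => [|k IH] A B V g hA hB hV.
  move=> cg.
  exists (fun j => match j return tcar (itM A j) -> tcar B with 0 => g | _ => fun=> 0 end).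
  by split=> // [] [].
case=> cg [g1 dg /(IH _ _ _ _ _ _ (open_itV1 hV))[hs [hs0 chs dhs]]].
exists (fun j => match j return tcar (itM A j) -> tcar B with
  | 0 => g | j.+1 => fun p => hs j (peel j p) end); split=> //.
- case=> [|j] // jk.
  exact: (C0_comp HD (open_itV j.+1 hV) (open_itV j (open_itV1 hV))
    (fun p => (itV_peel j p).1) (C0_setT_sub (open_itV j.+1 hV) (C0_peel j)) (chs j jk)).
- case=> [|j] jk p Vp; first by rewrite /= hs0 //; apply: dg.
  by rewrite /= peelDZ; exact: (dhs j jk (peel j.+1 p) ((itV_peel j.+1 p).1 Vp)).
Qed.

Lemma isCk_local {A B U f I} {Ui : I -> set (tcar A)} {hA : inM D A} {hB : inM D B} {k} :
  topen A U -> (forall i, topen A (Ui i)) -> \bigcup_i Ui i = U ->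
  (forall i, isCk A B (Ui i) f k) -> isCk A B U f k.
Proof.
move=> hU hUi cover hf; apply: (Ck_isCk hU).
by apply: (Ck_local hU hUi cover) => i; apply: (isCk_Ck (hUi i) (hf i)).
Qed.

End C0Concept.

Theorem lemma4p9 (K : fieldType) (tauK : set (set K)) (D : C0data K)
  (HD : C0concept K tauK D) (E F : TMod K) (hE : inM D E) (hF : inM D F)
  (U : set (tcar E)) (hU : topen E U) (f : tcar E -> tcar F) (k : ext_nat)
  (I : Type) (Ui : I -> set (tcar E))
  (hUi : forall i, topen E (Ui i)) (hcov : \bigcup_i Ui i = U)
  (hf : forall i, isC K tauK D E F (Ui i) f k) :
  isC K tauK D E F U f k.
Proof.
case: k hf => [n|] hf /=; first exact: (isCk_local HD hU hUi hcov hf).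
by move=> n; exact: (isCk_local HD hU hUi hcov (fun i => hf i n)).
Qed.
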